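(* Let $Q=\langle b\rangle\ltimes_{(g,\gamma)}X$. Then the congruence of $Q$ induced by the abelian normal subgroup $1\times X$ is abelian if and only if $Q$ is a group.
   Context: Let $(X,+)$ be an abelian group and $(g,\gamma)$ a construction pair on it: $g$ a permutation of $X$, $\gamma:X\times X\to X$ symmetric, alternating, biadditive, with (C1) $g^{-1}(g(x)+g(y))=x+y+\gamma(x,y)+g^{-1}(\gamma(x,y))+g^{-2}(\gamma(x,y))$, (C2) $\gamma(\gamma(x,y),z)=0$, (C3) $g^{-1}(\gamma(x,y))=\gamma(g(x),y)$ for all $x,y,z$. Let $\mathrm{Rad}(\gamma)=\{x:\gamma(x,y)=0\ \forall y\}$ and $r(g,\gamma)$ the least positive $r$ with $\sum_{0\le k<r}g^k(x)\in\mathrm{Rad}(\gamma)$ for all $x$ ($\infty$ if none). $I(i,j)$ is $\emptyset$ if $i=j$, $\{i,\dots,j-1\}$ if $i<j$, $\{j,\dots,i-1\}$ if $j<i$. For a cyclic group $C=\langle b\rangle$ such that (if finite) $|g|$ and $r(g,\gamma)$ divide $|C|$, $C\ltimes_{(g,\gamma)}X$ is the Moufang loop on $C\times X$ with multiplication $(b^i,x)(b^j,y)=(b^{i+j},g^{-j}(x)+y+\sum_{k\in I(i+j,-j)}g^{-k}(\gamma(x,y)))$, neutral element $(1,0)$. In a loop $Q$ let $L_x(y)=xy$, $R_x(y)=yx$, $T_x=R_x^{-1}L_x$, $L_{x,y}=L_{xy}^{-1}L_xL_y$, $R_{x,y}=R_{xy}^{-1}R_yR_x$. A normal subloop $N$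 induces the congruence $\rho_N=\{(u,v):uN=vN\}$. For congruences $\rho,\sigma$ of $Q$, the commutator $[\rho,\sigma]_Q$ is the congruence generated by all pairs $(T_{b_1}(a),T_{c_1}(a))$, $(L_{b_1,b_2}(a),L_{c_1,c_2}(a))$, $(R_{b_1,b_2}(a),R_{c_1,c_2}(a))$ with $1\,\rho\, a$, $b_1\,\sigma\, c_1$, $b_2\,\sigma\,c_2$. A congruence $\rho$ is abelian if $[\rho,\rho]_Q$ is the identity relation. *)

From HB Require Import structures.
From mathcomp Require Import all_boot all_order all_algebra.
Set Implicit Arguments. Unset Strict Implicit. Unset Printing Implicit Defensive.
Import Order.TTheory GRing.Theory Num.Theory.
Local Open Scope ring_scope.

(* Left/right translations L_x, R_x are bijections in a loop; their    *)
(* inverses are expressed relationally ("the z with ...").             *)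
Section Loops.
Variables (T : Type) (mul : T -> T -> T) (one : T).

Definition loop_congruence (th : T -> T -> Prop) : Prop :=
  (forall x, th x x) /\
  (forall x y, th x y -> th y x) /\
  (forall x y z, th x y -> th y z -> th x z) /\
  (forall x x' y y', th x x' -> th y y' -> th (mul x y) (mul x' y')) /\
      (* left division: x \ u = z iff x * z = u *)
      (forall x x' u u' z z', th x x' -> th u u' ->
          mul x z = u -> mul x' z' = u' -> th z z') /\
      (* right division: u / y = z iff z * y = u *)
      (forall y y' u u' z z', th y y' -> th u u' ->
          mul z y = u -> mul z' y' = u' -> th z z').

Definition cong_gen (P : T -> T -> Prop) (u v : T) : Prop :=
  forall th, loop_congruence th -> (forall a b, P a b -> th a b) -> th u v.

Definition normal_cong (N : T -> Prop) (u v : T) : Prop :=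
  forall w, (exists m, N m /\ w = mul u m) <-> (exists m, N m /\ w = mul v m).

(* generators of [rho, sigma]:
   T_b(a) = R_b^{-1}(L_b a)              : the z with  z*b = b*a
   L_{b1,b2}(a) = L_{b1 b2}^{-1} L_b1 L_b2 a : the z with (b1*b2)*z = b1*(b2*a)
   R_{b1,b2}(a) = R_{b1 b2}^{-1} R_b2 R_b1 a : the z with z*(b1*b2) = (a*b1)*b2 *)
Definition commutator_gens (rho sigma : T -> T -> Prop) (u v : T) : Prop :=
  (exists a b1 c1, [/\ rho one a, sigma b1 c1,
       mul u b1 = mul b1 a & mul v c1 = mul c1 a])
  \/ (exists a b1 b2 c1 c2, [/\ rho one a, sigma b1 c1, sigma b2 c2,
       mul (mul b1 b2) u = mul b1 (mul b2 a) &
       mul (mul c1 c2) v = mul c1 (mul c2 a)])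
  \/ (exists a b1 b2 c1 c2, [/\ rho one a, sigma b1 c1, sigma b2 c2,
       mul u (mul b1 b2) = mul (mul a b1) b2 &
       mul v (mul c1 c2) = mul (mul a c1) c2]).

Definition loop_commutator (rho sigma : T -> T -> Prop) : T -> T -> Prop :=
  cong_gen (commutator_gens rho sigma).

Definition abelian_cong (rho : T -> T -> Prop) : Prop :=
  forall u v, loop_commutator rho rho u v -> u = v.

Definition loop_is_group : Prop := associative mul.

End Loops.

Section ConstructionPair.
Variables (X : zmodType) (g ginv : X -> X) (gam : X -> X -> X).

(* integer powers g^k ; ginv is the inverse permutation of g *)
Definition gpow (k : int) (x : X) : X :=
  match k with
  | Posz m => iter m g x
  | Negz m => iter m.+1 ginv x
  end.

Definition construction_pair : Prop :=
  cancel g ginv /\ cancel ginv g /\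
      (forall x y, gam x y = gam y x) /\
      (forall x, gam x x = 0) /\
      (forall x y z, gam (x + y) z = gam x z + gam y z) /\
      (forall x y z, gam x (y + z) = gam x y + gam x z) /\
      (forall x y, ginv (g x + g y) =
          x + y + gam x y + ginv (gam x y) + ginv (ginv (gam x y))) /\
      (forall x y z, gam (gam x y) z = 0) /\
      (forall x y, ginv (gam x y) = gam (g x) y).

Definition inRad (x : X) : Prop := forall y, gam x y = 0.

Definition r_prop (r : nat) : Prop :=
  forall x, inRad (\sum_(k < r) iter k g x).

Definition is_r_g_gam (r : nat) : Prop :=
  [/\ (0 < r)%N, r_prop r & forall r', (0 < r')%N -> (r' < r)%N -> ~ r_prop r'].

Definition is_order_g (m : nat) : Prop :=
  [/\ (0 < m)%N, (forall x, iter m g x = x) &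
      forall m', (0 < m')%N -> (m' < m)%N -> ~ (forall x, iter m' g x = x)].

(* admissibility of the cyclic group C of order n (n = 0 encodes C
   infinite cyclic): if C is finite, |g| and r(g,gamma) divide |C| *)
Definition cyclic_admissible (n : nat) : Prop :=
  (0 < n)%N ->
  (exists m, is_order_g m /\ (m %| n)%N) /\
  (exists r, is_r_g_gam r /\ (r %| n)%N).

Definition Isum (i j : int) (F : int -> X) : X :=
  if i < j then \sum_(t < `|j - i|%N) F (i + t%:Z)
  else \sum_(t < `|i - j|%N) F (j + t%:Z).

End ConstructionPair.

(* The loop  C x_(g,gamma) X  with C = <b> cyclic of order n           *)
(* (n = 0: infinite cyclic).  b^i is represented by the integer i,     *)
(* reduced modulo n (i.e. 0 <= i < n if n > 0, any integer if n = 0).  *)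
Definition Qcar (X : zmodType) (n : nat) :=
  {p : (int * X)%type | (p.1 %% n%:Z)%Z == p.1}.

Lemma Qcar_closed (X : zmodType) (n : nat) (i : int) (x : X) :
  let p := (((i %% n%:Z)%Z, x) : int * X) in (p.1 %% n%:Z)%Z == p.1.
Proof. by rewrite /= modz_mod. Qed.

Definition Qmk (X : zmodType) (n : nat) (i : int) (x : X) : Qcar X n :=
  @exist (int * X)%type (fun p => (p.1 %% n%:Z)%Z == p.1) _ (Qcar_closed n i x).

Definition Qmul (X : zmodType) (n : nat) (g ginv : X -> X)
    (gam : X -> X -> X) (u v : Qcar X n) : Qcar X n :=
  let i := (val u).1 in let x := (val u).2 in
  let j := (val v).1 in let y := (val v).2 in
  Qmk n (i + j)
    (gpow g ginv (- j) x + y +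
     Isum (i + j) (- j) (fun k => gpow g ginv (- k) (gam x y))).

Definition Qone (X : zmodType) (n : nat) : Qcar X n := Qmk n 0 0.

Definition QN (X : zmodType) (n : nat) (u : Qcar X n) : Prop := (val u).1 = 0.

From HB Require Import structures.
From mathcomp Require Import all_boot all_order all_algebra zify.
Set Implicit Arguments. Unset Strict Implicit. Unset Printing Implicit Defensive.
Import Order.TTheory GRing.Theory Num.Theory.
Local Open Scope ring_scope.

(* Both conditions turn out to be equivalent to gamma = 0:
   - If |C| <> 1 the element b = (b,0) exists and, for x, y in X, the
     X-coordinates of ((0,x)(0,y))b and (0,x)((0,y)b) differ by
     gamma(x,y), so associativity forces gamma = 0; the same discrepancy
     gives the pair
     (R_{(0,y),b}(0,x), R_{1,b}(0,x)) = ((0, x + g(gamma(x,y))), (0,x))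
     of generators of [rho_N, rho_N], so abelianness forces gamma = 0.
     If |C| = 1, admissibility gives r(g,gamma) = 1, i.e. gamma = 0.
   - If gamma = 0, g is additive and Q is the semidirect product of C by
     X with b acting through g^(-1); it is associative because g^|C| = 1.
     In a group the L- and R-generators of a commutator are trivial, and
     the T-generators of [rho_N, rho_N] are trivial because X is abelian. *)

(* In an associative cancellative operation the L- and R-generators of any
   commutator are trivial and equality is a congruence, so a congruence
   rho is abelian as soon as its T-generators T_b(a), T_c(a) coincide. *)
Lemma abelian_cong_in_group (T : Type) (mul : T -> T -> T) (one : T)
    (rho : T -> T -> Prop) :
  associative mul ->
  (forall s, injective (mul s)) -> (forall s, injective (mul^~ s)) ->
  (forall a b c u v, rho one a -> rho b c ->
     mul u b = mul b a -> mul v c = mul c a -> u = v) ->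
  abelian_cong mul one rho.
Proof.
move=> mulA mulI mulIr Tgen u v Hc; apply: (Hc eq).
  do 4 (split; first by move=> * ; subst).
  split.
    by move=> x _ u0 _ z z' <- <- e1 e2; apply: (mulI x); rewrite e1 e2.
  by move=> y _ u0 _ z z' <- <- e1 e2; apply: (mulIr y); rewrite e1 e2.
move=> p q [[a [b [c [ha hbc e1 e2]]]]|[[a [b1 [b2 [c1 [c2 [_ _ _ e1 e2]]]]]]|
  [a [b1 [b2 [c1 [c2 [_ _ _ e1 e2]]]]]]]].
- exact: Tgen ha hbc e1 e2.
- by rewrite mulA in e1; rewrite mulA in e2; rewrite (mulI _ _ _ e1) (mulI _ _ _ e2).
- by rewrite -mulA in e1; rewrite -mulA in e2; rewrite (mulIr _ _ _ e1) (mulIr _ _ _ e2).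
Qed.

Lemma modz_cancelDr (n : nat) (a u v : int) :
  (u %% n%:Z)%Z = u -> (v %% n%:Z)%Z = v ->
  ((u + a) %% n%:Z)%Z = ((v + a) %% n%:Z)%Z -> u = v.
Proof.
move=> hu hv h.
have : ((u + a - a) %% n%:Z)%Z = ((v + a - a) %% n%:Z)%Z.
  by rewrite -modzDml h modzDml.
by rewrite !addrK hu hv.
Qed.

Lemma mod1z (n : nat) : n <> 1%N -> (1 %% n%:Z)%Z = 1.
Proof.
case: n => [|[|n]] h; first by rewrite modz0.
  by case: h.
by rewrite modz_small.
Qed.

Section ConstructionPairFacts.
Variables (X : zmodType) (g ginv : X -> X) (gam : X -> X -> X).
Hypothesis Hcp : construction_pair g ginv gam.

Let gK : cancel g ginv. Proof. by case: Hcp. Qed.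
Let ginvK : cancel ginv g. Proof. by case: Hcp => _ []. Qed.
Let gamC : forall x y, gam x y = gam y x.
Proof. by case: Hcp => _ [_ []]. Qed.
Let gamDl : forall x y z, gam (x + y) z = gam x z + gam y z.
Proof. by case: Hcp => _ [_ [_ [_ []]]]. Qed.
Let C1 : forall x y, ginv (g x + g y) =
  x + y + gam x y + ginv (gam x y) + ginv (ginv (gam x y)).
Proof. by case: Hcp => _ [_ [_ [_ [_ [_ []]]]]]. Qed.
Let C2 : forall x y z, gam (gam x y) z = 0.
Proof. by case: Hcp => _ [_ [_ [_ [_ [_ [_ []]]]]]]. Qed.
Let C3 : forall x y, ginv (gam x y) = gam (g x) y.
Proof. by case: Hcp => _ [_ [_ [_ [_ [_ [_ []]]]]]]. Qed.

Lemma gam0l (y : X) : gam 0 y = 0.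
Proof.
have h := gamDl 0 0 y; rewrite addr0 in h.
by apply: (@addrI _ (gam 0 y)); rewrite -h addr0.
Qed.

Lemma gam0r (y : X) : gam y 0 = 0.
Proof. by rewrite gamC gam0l. Qed.

Lemma ginv0 : ginv 0 = 0.
Proof. by rewrite -{1}(gam0l 0) C3 gam0r. Qed.

Lemma g0 : g 0 = 0.
Proof. by rewrite -{1}ginv0 ginvK. Qed.

Lemma gam_ginvr (x y : X) : gam x (ginv y) = g (gam x y).
Proof.
have : ginv (gam (ginv y) x) = gam y x by rewrite C3 ginvK.
by move/(congr1 g); rewrite ginvK gamC => ->; rewrite gamC.
Qed.

Lemma ginvD (x y : X) :
  ginv (x + y) = ginv x + ginv y + g (g (gam x y)) + g (gam x y) + gam x y.
Proof.
have e : gam (ginv x) (ginv y) = g (g (gam x y)).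
  by rewrite gam_ginvr gamC gam_ginvr gamC.
by rewrite -{1}(ginvK x) -{1}(ginvK y) C1 e !gK.
Qed.

Lemma ginvD_gam (x a b : X) : ginv (x + g (gam a b)) = ginv x + gam a b.
Proof. by rewrite -{1}(ginvK x) C1 (gamC (ginv x)) C2 ginv0 ginv0 !addr0. Qed.

Lemma gam_g_gam (a b z : X) : gam (g (gam a b)) z = 0.
Proof. by rewrite -C3 C2 ginv0. Qed.

Lemma gamD_g_gam (x a b z : X) : gam (x + g (gam a b)) z = gam x z.
Proof. by rewrite gamDl gam_g_gam addr0. Qed.

Lemma gpow_additive : (forall x y, gam x y = 0) ->
  forall k a b, gpow g ginv k (a + b) = gpow g ginv k a + gpow g ginv k b.
Proof.
move=> gam0 k.
have gD a b : g (a + b) = g a + g b.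
  by have := C1 a b; rewrite gam0 ginv0 ginv0 !addr0 => <-; rewrite ginvK.
have ginvD0 a b : ginv (a + b) = ginv a + ginv b.
  by rewrite ginvD gam0 !g0 !addr0.
case: k => m a b /=.
- by elim: m => //= m ->; rewrite gD.
- by elim: m => [|m IH] /=; rewrite ?IH ginvD0.
Qed.

Lemma gpow0 (k : int) : gpow g ginv k 0 = 0.
Proof.
case: k => m /=.
- by elim: m => //= m ->; rewrite g0.
- by elim: m => [|m IH] /=; rewrite ?IH ginv0.
Qed.

End ConstructionPairFacts.

Lemma admissible1_gam0 (X : zmodType) (g : X -> X) (gam : X -> X -> X) :
  cyclic_admissible g gam 1 -> forall x y, gam x y = 0.
Proof.
move=> /(_ isT) [_ [r [[_ hr _] r1]]] x y.
by move: r1 hr; rewrite dvdn1 => /eqP -> /(_ x y); rewrite big_ord_recl big_ord0 addr0.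
Qed.

(* If C is finite, admissibility gives |g| | |C|, hence g^|C| = id. *)
Lemma admissible_period (X : zmodType) (g : X -> X) (gam : X -> X -> X)
    (n : nat) :
  cyclic_admissible g gam n -> (0 < n)%N -> forall x, iter n g x = x.
Proof.
move=> HC n0 x; have [[m [[_ hm _] /dvdnP [k ->]]] _] := HC n0.
elim: k => [|k IH]; first by rewrite mul0n.
by rewrite mulSn iterD IH hm.
Qed.

Section IntegerPowers.
Variables (X : zmodType) (g ginv : X -> X).
Hypotheses (gK : cancel g ginv) (ginvK : cancel ginv g).

Lemma gpow1D (b : int) (x : X) : gpow g ginv (1 + b) x = g (gpow g ginv b x).
Proof.
case: b => [m|[|m]].
- by have -> : 1 + Posz m = Posz m.+1 by lia.
- have -> : 1 + Negz 0 = 0 by lia.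
  by rewrite /= ginvK.
- have -> : 1 + Negz m.+1 = Negz m by lia.
  by rewrite /= ginvK.
Qed.

Lemma gpowN1D (b : int) (x : X) :
  gpow g ginv (-1 + b) x = ginv (gpow g ginv b x).
Proof.
case: b => [[|m]|m].
- by have -> : -1 + Posz 0 = Negz 0 by lia.
- have -> : -1 + Posz m.+1 = Posz m by lia.
  by rewrite /= gK.
- by have -> : -1 + Negz m = Negz m.+1 by lia.
Qed.

Lemma gpowD (a b : int) (x : X) :
  gpow g ginv (a + b) x = gpow g ginv a (gpow g ginv b x).
Proof.
case: a => m.
- elim: m => [|m IH]; first by rewrite add0r.
  have -> : Posz m.+1 + b = 1 + (Posz m + b) by lia.
  by rewrite gpow1D IH.
- elim: m => [|m IH]; first by rewrite gpowN1D.
  have -> : Negz m.+1 + b = -1 + (Negz m + b) by lia.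
  by rewrite gpowN1D IH.
Qed.

Lemma gpow_inj (k : int) : injective (gpow g ginv k).
Proof.
move=> a b /(congr1 (gpow g ginv (- k))).
by rewrite -!gpowD addNr.
Qed.

Lemma gpow_mod (n : nat) : ((0 < n)%N -> forall x, iter n g x = x) ->
  forall a b, (a %% n%:Z)%Z = (b %% n%:Z)%Z ->
  forall y, gpow g ginv a y = gpow g ginv b y.
Proof.
move=> hper.
have gpow_n q y : gpow g ginv (q * n%:Z) y = y.
  case: n hper => [|n] hper; first by rewrite mulr0.
  have hP m z : gpow g ginv (Posz m * Posz n.+1) z = z.
    elim: m z => [|m IH] z; first by rewrite mul0r.
    have -> : Posz m.+1 * Posz n.+1 = Posz n.+1 + Posz m * Posz n.+1 by lia.
    by rewrite gpowD IH; exact: hper.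
  case: q => m; first exact: hP.
  have -> : Negz m * Posz n.+1 = - (Posz m.+1 * Posz n.+1) by lia.
  by rewrite -{1}(hP m.+1 y) -gpowD addNr.
move=> a b hab y.
by rewrite (divz_eq a n%:Z) (divz_eq b n%:Z) hab !gpowD !gpow_n.
Qed.

End IntegerPowers.

Lemma Qrep (X : zmodType) (n : nat) (u : Qcar X n) :
  ((val u).1 %% n%:Z)%Z = (val u).1.
Proof. exact: eqP (valP u). Qed.

Lemma Qeta (X : zmodType) (n : nat) (u : Qcar X n) :
  u = Qmk n (val u).1 (val u).2.
Proof. by apply: val_inj; move: (Qrep u) => /= ->; case: (sval u). Qed.

Section LoopQ.
Variables (X : zmodType) (n : nat) (g ginv : X -> X) (gam : X -> X -> X).
Local Notation mulQ := (@Qmul X n g ginv gam).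

Lemma Qmk0_fst (z : X) : (val (Qmk n 0 z)).1 = 0.
Proof. by rewrite /= mod0z. Qed.

Lemma mulQ_N (y : X) (p : Qcar X n) :
  (val p).1 = 0 -> mulQ (Qmk n 0 y) p = Qmk n 0 (y + (val p).2).
Proof. by move=> hp; rewrite /Qmul /= hp mod0z add0r /Isum /= big_ord0 addr0. Qed.

Lemma mulQ_Nb (x w : X) : n <> 1%N ->
  mulQ (Qmk n 0 x) (Qmk n 1 w) =
  Qmk n 1 (ginv x + w + g (gam x w) + gam x w).
Proof.
move=> hn; rewrite /Qmul /= mod1z // mod0z add0r /Isum /=.
by rewrite !big_ord_recl big_ord0 /= addr0 addrA.
Qed.

Lemma rhoN_N (x y : X) :
  normal_cong mulQ (@QN X n) (Qmk n 0 x) (Qmk n 0 y).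
Proof.
move=> w; split => -[m [hm ->]]; rewrite mulQ_N //.
  exists (Qmk n 0 (x + (val m).2 - y)); split; first exact: Qmk0_fst.
  by rewrite mulQ_N ?Qmk0_fst // [y + _]addrC subrK.
exists (Qmk n 0 (y + (val m).2 - x)); split; first exact: Qmk0_fst.
by rewrite mulQ_N ?Qmk0_fst // [x + _]addrC subrK.
Qed.

Section NonzeroGamma.
Hypotheses (Hcp : construction_pair g ginv gam) (hn : n <> 1%N).

(* the associator of (0,x), (0,y), b:
   ((0,x)(0,y))b and (0,x)((0,y)b) differ by (0, g(gamma(x,y))) *)
Lemma associator_Nb (x y : X) :
  mulQ (mulQ (Qmk n 0 x) (Qmk n 0 y)) (Qmk n 1 0) =
    Qmk n 1 (ginv x + ginv y + g (g (gam x y)) + g (gam x y) + gam x y) /\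
  mulQ (Qmk n 0 x) (mulQ (Qmk n 0 y) (Qmk n 1 0)) =
    Qmk n 1 (ginv x + ginv y + g (g (gam x y)) + g (gam x y)).
Proof.
rewrite !mulQ_Nb // mulQ_N ?Qmk0_fst // mulQ_Nb //= !(gam0r Hcp) (g0 Hcp) !addr0.
by rewrite (ginvD Hcp) !(gam_ginvr Hcp).
Qed.

Lemma gam0_of_group : loop_is_group mulQ -> forall x y, gam x y = 0.
Proof.
move=> mulA x y; have [e1 e2] := associator_Nb x y.
move: (mulA (Qmk n 0 x) (Qmk n 0 y) (Qmk n 1 0)); rewrite e1 e2.
move=> /(congr1 (fun u => (val u).2)) /= /eqP.
by rewrite eq_sym -subr_eq0 addrAC subrr add0r => /eqP.
Qed.

Lemma commutator_Nb (x y : X) :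
  loop_commutator mulQ (Qone X n) (normal_cong mulQ (@QN X n))
    (normal_cong mulQ (@QN X n)) (Qmk n 0 (x + g (gam x y))) (Qmk n 0 x).
Proof.
move=> th _ HP; apply: HP; right; right.
exists (Qmk n 0 x), (Qmk n 0 y), (Qmk n 1 0), (Qone X n), (Qmk n 1 0).
split; [exact: rhoN_N | exact: rhoN_N | by [] | |].
- rewrite (associator_Nb x y).1 !mulQ_Nb // !(gam0r Hcp) (g0 Hcp) !addr0.
  rewrite (ginvD_gam Hcp) (gamD_g_gam Hcp) (gam_ginvr Hcp); congr Qmk.
  by rewrite -!addrA; congr (_ + _); rewrite addrC -!addrA.
- rewrite /Qone (mulQ_N x (Qmk0_fst 0)) (mulQ_Nb 0 0 hn) addr0.
  by rewrite (ginv0 Hcp) (gam0l Hcp) (g0 Hcp) !addr0.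
Qed.

Lemma gam0_of_abelian :
  abelian_cong mulQ (Qone X n) (normal_cong mulQ (@QN X n)) ->
  forall x y, gam x y = 0.
Proof.
move=> HA x y; have := congr1 (fun u => (val u).2) (HA _ _ (commutator_Nb x y)).
move=> /= /eqP; rewrite -subr_eq0 addrAC subrr add0r => /eqP /(congr1 ginv).
by case: Hcp => gK _; rewrite gK (ginv0 Hcp).
Qed.

End NonzeroGamma.

Section ZeroGamma.
Hypotheses (Hcp : construction_pair g ginv gam) (gam0 : forall x y, gam x y = 0).
Hypothesis gper : (0 < n)%N -> forall x, iter n g x = x.

Let gK : cancel g ginv. Proof. by case: Hcp. Qed.
Let ginvK : cancel ginv g. Proof. by case: Hcp => _ []. Qed.

Lemma mulQ_semidirect (u v : Qcar X n) :
  val (mulQ u v) = ((((val u).1 + (val v).1) %% n%:Z)%Z,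
                    gpow g ginv (- (val v).1) (val u).2 + (val v).2).
Proof.
rewrite /Qmul /= gam0.
suff -> : forall i j : int, Isum i j (fun k => gpow g ginv (- k) 0) = 0.
  by rewrite addr0.
by move=> i j; rewrite /Isum; case: ifP => _; apply: big1 => t _; exact: (gpow0 Hcp).
Qed.

(* g^|C| = id makes the twist g^(-j) depend only on b^j *)
Lemma mulQA : associative mulQ.
Proof.
move=> u v w; apply: val_inj; rewrite !mulQ_semidirect /=.
congr pair; first by rewrite modzDml modzDmr addrA.
rewrite !(gpow_additive Hcp) // addrA; congr (_ + _ + _).
rewrite -gpowD //; apply: (gpow_mod gK ginvK gper).
by rewrite modzNm opprD addrC.
Qed.

Lemma mulQI (s : Qcar X n) : injective (mulQ s).
Proof.
move=> u v /(congr1 val); rewrite !mulQ_semidirect => -[h1 h2].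
have e1 : (val u).1 = (val v).1.
  by apply: (modz_cancelDr (a := (val s).1) (Qrep u) (Qrep v)); rewrite addrC h1 addrC.
by rewrite e1 in h2; move/addrI: h2 => e2; rewrite (Qeta u) (Qeta v) e1 e2.
Qed.

Lemma mulIQ (s : Qcar X n) : injective (mulQ^~ s).
Proof.
move=> u v /(congr1 val); rewrite !mulQ_semidirect => -[h1 h2].
have e1 : (val u).1 = (val v).1 by exact: (modz_cancelDr (Qrep u) (Qrep v) h1).
move/addIr: h2 => /(gpow_inj gK ginvK) e2.
by rewrite (Qeta u) (Qeta v) e1 e2.
Qed.

Lemma mulQ1 (u : Qcar X n) : mulQ u (Qone X n) = u.
Proof.
apply: val_inj; rewrite mulQ_semidirect /= mod0z oppr0 !addr0 Qrep.
by case: u => [[i x] hi].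
Qed.

Lemma rhoN_fst (u v : Qcar X n) :
  normal_cong mulQ (@QN X n) u v -> (val u).1 = (val v).1.
Proof.
move=> /(_ u) [h _]; have [|m [hm ->]] := h.
  by exists (Qone X n); rewrite mulQ1 /QN /= mod0z.
by rewrite mulQ_semidirect /= hm addr0 Qrep.
Qed.

Lemma T_in_N (u b a : Qcar X n) : (val a).1 = 0 -> mulQ u b = mulQ b a ->
  (val u).1 = 0 /\ gpow g ginv (- (val b).1) (val u).2 = (val a).2.
Proof.
move=> ha /(congr1 val); rewrite !mulQ_semidirect ha oppr0 => -[h1 h2].
split; last by move: h2; rewrite /= [RHS]addrC => /addIr.
apply: (modz_cancelDr (a := (val b).1) (Qrep u)); first exact: mod0z.
by rewrite h1 addr0 add0r.
Qed.

(* with gamma = 0, rho_N is abelian: two T-generators T_b(a), T_c(a) with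
   b rho_N c are both a twisted by the same power of g *)
Lemma abelian_rhoN :
  abelian_cong mulQ (Qone X n) (normal_cong mulQ (@QN X n)).
Proof.
apply: abelian_cong_in_group mulQA mulQI mulIQ _ => a b c u v ha hbc e1 e2.
have a0 : (val a).1 = 0 by rewrite -(rhoN_fst ha) Qmk0_fst.
have [u0 hu] := T_in_N a0 e1; have [v0 hv] := T_in_N a0 e2.
rewrite (rhoN_fst hbc) -hv in hu; move/(gpow_inj gK ginvK): hu => e.
by rewrite (Qeta u) (Qeta v) u0 v0 e.
Qed.

End ZeroGamma.
End LoopQ.

Theorem mainTheorem9 (X : zmodType) (n : nat) (g ginv : X -> X)
    (gam : X -> X -> X)
    (Hcp : construction_pair g ginv gam)
    (HC : cyclic_admissible g gam n) :
  abelian_cong (@Qmul X n g ginv gam) (Qone X n)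
    (normal_cong (@Qmul X n g ginv gam) (@QN X n))
  <-> loop_is_group (@Qmul X n g ginv gam).
Proof.
have gper := admissible_period HC.
have [n1|n1] := eqVneq n 1%N.
  have gam0 : forall x y, gam x y = 0 by subst n; exact: admissible1_gam0 HC.
  by split=> _; [exact: mulQA | exact: abelian_rhoN].
have hn : n <> 1%N by apply/eqP.
split=> h.
  exact: mulQA Hcp (gam0_of_abelian Hcp hn h) gper.
exact: abelian_rhoN Hcp (gam0_of_group Hcp hn h) gper.
Qed.
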